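(* For every $n \ge 2$, the $n$-crown poset $X_n$ is 2-chain-retractable to the 2-chain, i.e. $X_n \oslash C_2 \cong C_2$ and $X_n \not\cong C_2$, where $C_2$ is the 2-chain.
   Context: The 2-chain $C_2$ is the poset $\{x<y\}$. The $n$-crown poset $X_n$ ($n\ge2$) has elements $a_1,\dots,a_n,b_1,\dots,b_n$ with order relations exactly $a_i<b_j$ for all $i\ne j$ (besides reflexivity). Notation: $\ell(X)$ is the cardinality of a longest chain of a poset $X$. A subset $A$ of a poset $X$ is maximally ordered in $X$ if $|\{(a,b)\in A\times A:a<b\}|$ is maximal among subsets of $X$ of cardinality $|A|$. For $\sigma\in\mathrm{Aut}(P)$, $\Sigma(\sigma)=\{a:\sigma(a)\ne a\}$. For a finite poset $Q$ and $r\ge2$: $\sigma\in\mathrm{Aut}(P)$ is a $(Q,r)$-generator if there exist subsets $S_0,\dots,S_{r-1}\subset\Sigma(\sigma)$, each isomorphic to $Q$, which are smallest maximally ordered subsets of $\Sigma(\sigma)$ with $\sigma(S_i)=S_{(i+1)\bmod r}$, $\ell(S_i)=\ell(\Sigma(\sigma))$, $\bigcup_iS_i=\Sigma(\sigma)$; distinct $S_i,S_j$ are $(Q,r)$-symmetric subsets. Elements $a,b$ are $(Q,r,0)$-symmetric if $a=b$; $(Q,r,1)$-symmetric if there are $(Q,r)$-symmetric subsets $A,B$ with generator $\sigma$, $a\in A$, $b=\sigma^q(a)\in B$, $1\le q<r$; for $n\ge2$, $(Q,r,n)$-symmetric if not $(Q,r,j)$-symmetric for $j<n$ but there exist $c$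 and $j<n$ with $a$ $(Q,r,j)$-symmetric to $c$ and $c$ $(Q,r,n-j)$-symmetric to $b$; $(Q,r)$-symmetric if $(Q,r,n)$-symmetric for some $n\ge0$ (an equivalence relation). $P\oslash_rQ$ is the quotient poset of the equivalence classes with $E\le F$ iff some $e\in E$, $f\in F$ satisfy $e\le f$; $P\oslash Q$ means $P\oslash_2Q$. $P$ is $(Q,r)$-retractable to $\tilde P$ if $P\oslash_rQ\cong\tilde P$ and $P\oslash_rQ\not\cong P$. *)

(* Finite posets are given as a finType carrier with a
   boolean order relation; subsets carry the induced order. *)
From mathcomp Require Import all_boot all_fingroup.
Set Implicit Arguments. Unset Strict Implicit. Unset Printing Implicit Defensive.

Section Defs.
Variables (T : finType) (le : rel T).

Definition lt_of (a b : T) : bool := (a != b) && le a b.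

Definition n_ordered (A : {set T}) : nat :=
  #|[set p : T * T | [&& p.1 \in A, p.2 \in A & lt_of p.1 p.2]]|.

Definition max_ordered (X A : {set T}) : bool :=
  (A \subset X) &&
  [forall B : {set T}, ((B \subset X) && (#|B| == #|A|)) ==> (n_ordered B <= n_ordered A)].

Definition is_chain (C : {set T}) : bool :=
  [forall x in C, forall y in C, le x y || le y x].

Definition height (X : {set T}) : nat :=
  \max_(C : {set T} | (C \subset X) && is_chain C) #|C|.

Definition is_aut (s : {perm T}) : bool :=
  [forall x, forall y, le (s x) (s y) == le x y].

Definition moved (s : {perm T}) : {set T} := [set a | s a != a].

Definition smallest_max_ordered (X A : {set T}) : bool :=
  [&& max_ordered X A, height A == height X &
   [forall B : {set T}, (max_ordered X B && (height B == height X)) ==> (#|A| <= #|B|)]].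
End Defs.

Definition iso_on (T U : finType) (leT : rel T) (A : {set T}) (leU : rel U) (B : {set U}) : bool :=
  [exists f : {ffun T -> U},
    [&& [forall x in A, forall y in A, (f x == f y) ==> (x == y)],
        f @: A == B &
        [forall x in A, forall y in A, leU (f x) (f y) == leT x y]]].

Section Symmetry.
Variables (T : finType) (le : rel T) (U : finType) (leQ : rel U) (r : nat).

Definition generator_fam (s : {perm T}) (F : {ffun 'I_r -> {set T}}) : bool :=
  [&& is_aut le s,
      [forall i, F i \subset moved s],
      [forall i, iso_on le (F i) leQ [set: U]],
      [forall i, smallest_max_ordered le (moved s) (F i)],
      [forall i : 'I_r, forall j : 'I_r, (nat_of_ord j == ((nat_of_ord i).+1 %% r)) ==> (s @: F i == F j)],
      [forall i, height le (F i) == height le (moved s)] &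
      \bigcup_i F i == moved s].

Definition sym1 (a b : T) : bool :=
  [exists s : {perm T}, exists F : {ffun 'I_r -> {set T}},
    generator_fam s F &&
    [exists i, exists j,
      [&& F i != F j, a \in F i, b \in F j &
          [exists q : 'I_r, (0 < nat_of_ord q) && (b == (s ^+ q)%g a)]]]].

(* (Q,r)-symmetry: union over n of (Q,r,n)-symmetry, i.e. the
   reflexive-transitive closure of (Q,r,1)-symmetry *)
Definition qr_sym (a b : T) : bool := connect sym1 a b.

Definition qr_classes : {set {set T}} := [set [set b | qr_sym a b] | a : T].
End Symmetry.

Definition quot_le (T : finType) (le : rel T) : rel {set T} :=
  fun E F => [exists e in E, exists f in F, le e f].

Definition retractable (T : finType) (le : rel T) (U : finType) (leQ : rel U) (r : nat)
    (V : finType) (leV : rel V) : Prop :=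
  iso_on (quot_le le) (qr_classes le leQ r) leV [set: V] /\
  ~~ iso_on (quot_le le) (qr_classes le leQ r) le [set: T].

Definition chain2_le : rel bool := fun x y => x ==> y.

(* the n-crown: (false, i) = a_i, (true, j) = b_j, a_i < b_j iff i <> j *)
Definition crown_le (n : nat) : rel (bool * 'I_n) :=
  fun x y => (x == y) || [&& ~~ x.1, y.1 & x.2 != y.2].
Arguments crown_le n : clear implicits.

From mathcomp Require Import all_boot all_fingroup.
Set Implicit Arguments. Unset Strict Implicit. Unset Printing Implicit Defensive.

(* Automorphisms preserve non-maximality, and for n >= 2 the non-maximal
   elements of the crown X_n are exactly the a_i.  Since (Q,r)-symmetric
   elements are related through powers of automorphisms, every symmetry class
   lies inside one of the levels {a_i} and {b_j}.  Conversely, for i <> j the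
   automorphism exchanging the indices i and j moves exactly a_i, a_j, b_i, b_j
   and swaps the 2-chains {a_i < b_j} and {a_j < b_i}; in a poset of height 2
   such 2-chains are smallest maximally ordered subsets of full height, so it
   is a (C_2,2)-generator and a_i ~ a_j, b_i ~ b_j.  Hence X_n / C_2 consists
   of the two levels, ordered as a 2-chain, while X_n has 2n > 2 elements. *)

Section Relations.
Variables (T : finType) (le : rel T).

Lemma iso_on_card (U : finType) (leU : rel U) (A : {set T}) (B : {set U}) :
  iso_on le A leU B -> #|B| = #|A|.
Proof.
case/existsP=> f /and3P[/forall_inP f_inj /eqP <- _].
apply: card_in_imset => x y xA yA fxy.
by apply/eqP; move: (f_inj x xA) => /forall_inP /(_ y yA) /implyP; apply; apply/eqP.
Qed.

Lemma iso_on_chain2 (x y : T) :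
  le x x -> le y y -> le x y -> ~~ le y x ->
  iso_on le [set x; y] chain2_le [set: bool].
Proof.
move=> le_xx le_yy le_xy Nle_yx.
have Nxy : (x == y) = false by apply: contraNF Nle_yx => /eqP <-.
apply/existsP; exists [ffun z => z == y]; apply/and3P; split.
- apply/forall_inP => u /set2P[]->; apply/forall_inP => v /set2P[]->;
  by rewrite !ffunE ?eqxx ?Nxy.
- apply/eqP/setP => -[]; rewrite inE; apply/imsetP.
  + by exists y; rewrite ?ffunE ?eqxx // !inE eqxx orbT.
  + by exists x; rewrite ?ffunE ?Nxy // !inE eqxx.
- apply/forall_inP => u /set2P[]->; apply/forall_inP => v /set2P[]->;
  by rewrite !ffunE ?eqxx ?Nxy /chain2_le /= ?le_xx ?le_yy ?le_xy ?(negbTE Nle_yx).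
Qed.

Definition nonmaximal (x : T) : bool := [exists y, lt_of le x y].

Lemma aut_lt (s : {perm T}) x y : is_aut le s -> lt_of le (s x) (s y) = lt_of le x y.
Proof.
by move=> /forallP/(_ x)/forallP/(_ y)/eqP le_s; rewrite /lt_of (inj_eq perm_inj) le_s.
Qed.

Lemma nonmaximal_aut (s : {perm T}) x : is_aut le s -> nonmaximal (s x) = nonmaximal x.
Proof.
move=> aut_s; apply/existsP/existsP => -[y lt_xy].
- by exists (s^-1 y)%g; rewrite -(aut_lt _ _ aut_s) permKV.
- by exists (s y); rewrite aut_lt.
Qed.

Lemma qr_sym_aut_invariant (X : Type) (f : T -> X) (U : finType) (leQ : rel U) r a b :
  (forall s x, is_aut le s -> f (s x) = f x) -> qr_sym le leQ r a b -> f a = f b.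
Proof.
move=> f_aut.
have f_pow s q x : is_aut le s -> f ((s ^+ q)%g x) = f x.
  by move=> aut_s; elim: q => [|q IH]; rewrite ?expg0 ?perm1 // expgSr permM f_aut.
have f_sym1 c d : sym1 le leQ r c d -> f c = f d.
  case/existsP=> s /existsP[F /andP[/and5P[aut_s _ _ _ _] /existsP[i /existsP[j]]]].
  by case/and4P=> _ _ _ /existsP[q /andP[_ /eqP ->]]; rewrite f_pow.
case/connectP=> p; elim: p a => [|c p IH] a /=; first by move=> _ ->.
by case/andP=> /f_sym1 -> /IH.
Qed.

Lemma height_le_card (X : {set T}) : height le X <= #|X|.
Proof. by apply/bigmax_leqP => C /andP[/subset_leq_card]. Qed.

Lemma chain_le_height (C X : {set T}) :
  C \subset X -> is_chain le C -> #|C| <= height le X.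
Proof.
by move=> sCX chC; apply: (leq_bigmax_cond (F := fun C : {set T} => #|C|)); rewrite sCX.
Qed.

Definition fam2 (S0 S1 : {set T}) : {ffun 'I_2 -> {set T}} :=
  [ffun k => if k == ord0 then S0 else S1].

Lemma sym1_fam2 (U : finType) (leQ : rel U) (s : {perm T}) (S0 S1 : {set T}) a :
  generator_fam le leQ s (fam2 S0 S1) -> S0 != S1 -> a \in S0 -> s a \in S1 ->
  sym1 le leQ 2 a (s a).
Proof.
move=> gen_s S01 aS0 saS1; apply/existsP; exists s; apply/existsP; exists (fam2 S0 S1).
rewrite gen_s; apply/existsP; exists ord0; apply/existsP; exists ord_max.
rewrite !ffunE /= S01 aS0 saS1; apply/existsP; exists ord_max.
by rewrite /= expg1.
Qed.

End Relations.

Section Posets.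
Variables (T : finType) (le : rel T).
Hypotheses (le_refl : reflexive le) (le_anti : antisymmetric le).

Lemma lt_of_Nle x y : lt_of le x y -> ~~ le y x.
Proof.
case/andP=> Nxy le_xy; apply: contra Nxy => le_yx.
by apply/eqP/le_anti; rewrite le_xy le_yx.
Qed.

Lemma n_ordered_pair (B : {set T}) : #|B| = 2 -> n_ordered le B <= 1.
Proof.
move/eqP/cards2P => [u [v [_ ->]]].
wlog Nlt_vu : u v / ~~ lt_of le v u => [hyp|].
  case lt_vu: (lt_of le v u); last by apply: hyp; rewrite lt_vu.
  by rewrite setUC; apply: hyp; apply/andP => -[_]; apply/negP/lt_of_Nle.
rewrite -(cards1 (u, v)); apply/subset_leq_card/subsetP => -[a b].
rewrite in_set /= => /and3P[/set2P[]-> /set2P[]->];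
  by rewrite ?set11 ?(negbTE Nlt_vu) // /lt_of eqxx.
Qed.

Lemma is_chain_pair x y : le x y -> is_chain le [set x; y].
Proof.
move=> le_xy; apply/forall_inP => u /set2P[]->; apply/forall_inP => v /set2P[]->;
  by rewrite ?le_refl ?le_xy ?orbT.
Qed.

Lemma height_pair x y : lt_of le x y -> height le [set x; y] = 2.
Proof.
case/andP=> Nxy le_xy; have card_xy : #|[set x; y]| = 2 by rewrite cards2 Nxy.
apply/eqP; rewrite eqn_leq -{1}card_xy height_le_card -{1}card_xy.
exact: chain_le_height (is_chain_pair le_xy).
Qed.

Lemma smallest_max_ordered_pair (X : {set T}) x y :
  lt_of le x y -> [set x; y] \subset X -> height le X <= 2 ->
  smallest_max_ordered le X [set x; y].
Proof.
move=> lt_xy sXY hX; have /andP[Nxy le_xy] := lt_xy.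
have card_xy : #|[set x; y]| = 2 by rewrite cards2 Nxy.
have hXE : height le X = 2.
  apply/eqP; rewrite eqn_leq hX -{1}card_xy.
  exact: chain_le_height sXY (is_chain_pair le_xy).
apply/and3P; split.
- rewrite /max_ordered sXY; apply/forallP => B; apply/implyP => /andP[_ /eqP].
  rewrite card_xy => /n_ordered_pair /leq_trans; apply; apply/card_gt0P.
  by exists (x, y); rewrite !inE /= !eqxx orbT.
- by rewrite height_pair ?hXE.
- apply/forallP => B; apply/implyP => /andP[_ /eqP hB].
  by rewrite card_xy -hXE -hB height_le_card.
Qed.

Lemma generator_fam2 (s : {perm T}) x0 y0 x1 y1 :
  is_aut le s -> lt_of le x0 y0 -> lt_of le x1 y1 -> height le (moved s) <= 2 ->
  moved s = [set x0; y0] :|: [set x1; y1] ->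
  s @: [set x0; y0] = [set x1; y1] -> s @: [set x1; y1] = [set x0; y0] ->
  generator_fam le chain2_le s (fam2 [set x0; y0] [set x1; y1]).
Proof.
move=> aut_s lt0 lt1 hX movedE s01 s10.
set F := fam2 _ _.
have F_pair k : exists x y, lt_of le x y /\ F k = [set x; y].
  by rewrite ffunE; case: ifP => _; [exists x0, y0 | exists x1, y1].
have F_cover : \bigcup_k F k = moved s by rewrite big_ord_recr big_ord1 !ffunE movedE.
have F_sub k : F k \subset moved s by rewrite -F_cover (bigcup_sup k).
have F_smo k : smallest_max_ordered le (moved s) (F k).
  have := F_sub k; have [x [y [lt_xy ->]]] := F_pair k.
  by move=> sub; apply: smallest_max_ordered_pair.
apply/and5P; split=> //; try apply/forallP => k.
- exact: F_sub.
- have [x [y [lt_xy ->]]] := F_pair k.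
  by apply: iso_on_chain2; rewrite ?le_refl ?lt_of_Nle //; case/andP: lt_xy.
- exact: F_smo.
apply/and3P; split; try apply/forallP => k.
- apply/forallP => l; case: k l => [[|[|//]] ?] [[|[|//]] ?] //=;
  by rewrite /F /fam2 !ffunE /= ?s01 ?s10.
- by case/and3P: (F_smo k).
- by rewrite F_cover.
Qed.

End Posets.

Section Crown.
Variable n : nat.
Implicit Types (x y : bool * 'I_n) (i j : 'I_n).

Lemma crown_le_refl : reflexive (crown_le n).
Proof. by move=> x; rewrite /crown_le eqxx. Qed.

Lemma crown_le_anti : antisymmetric (crown_le n).
Proof.
move=> x y; rewrite /crown_le [y == x]eq_sym; case: eqP => //= _.
by case/andP=> /and3P[/negbTE-> _ _] /and3P[].
Qed.

Lemma crown_ltE x y : lt_of (crown_le n) x y = [&& ~~ x.1, y.1 & x.2 != y.2].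
Proof.
rewrite /lt_of /crown_le; case: eqVneq => [->|] //=.
by rewrite andbA andNb.
Qed.

Lemma crown_height (X : {set bool * 'I_n}) : height (crown_le n) X <= 2.
Proof.
apply/bigmax_leqP => C /andP[_ /forall_inP chainC].
have fst_inj : {in C &, injective (fun x : bool * 'I_n => x.1)}.
  move=> x y xC yC xy1; move/forall_inP: (chainC x xC) => /(_ y yC).
  by rewrite /crown_le xy1 [y == x]eq_sym; case: (y.1); rewrite /= !orbF orbb => /eqP.
by rewrite -(card_in_imset fst_inj) -card_bool max_card.
Qed.

Definition crown_swap_fun i j x : bool * 'I_n := (x.1, tperm i j x.2).

Lemma crown_swap_fun_inj i j : injective (crown_swap_fun i j).
Proof. by move=> [a k] [b l] [-> /perm_inj ->]. Qed.

Definition crown_swap i j : {perm bool * 'I_n} := perm (@crown_swap_fun_inj i j).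

Lemma crown_swapE i j x : crown_swap i j x = (x.1, tperm i j x.2).
Proof. by rewrite permE. Qed.

Lemma crown_swap_aut i j : is_aut (crown_le n) (crown_swap i j).
Proof.
apply/forallP => x; apply/forallP => y.
by rewrite /crown_le (inj_eq perm_inj) !crown_swapE /= (inj_eq perm_inj).
Qed.

Lemma moved_crown_swap i j : i != j ->
  moved (crown_swap i j) = [set (false, i); (true, j)] :|: [set (false, j); (true, i)].
Proof.
move=> ij; have ji : j != i by rewrite eq_sym.
apply/setP => -[b k]; rewrite !inE crown_swapE /= !xpair_eqE eqxx /=.
by case: b; case: tpermP => [->|->|/eqP/negbTE ki /eqP/negbTE kj];
  rewrite ?eqxx ?ij ?ji ?ki ?kj ?orbT.
Qed.

Lemma crown_swap_set2 i j k l :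
  crown_swap i j @: [set (false, k); (true, l)] =
  [set (false, tperm i j k); (true, tperm i j l)].
Proof. by rewrite imsetU1 imset_set1 !crown_swapE. Qed.

Lemma crown_swap_generator i j : i != j ->
  generator_fam (crown_le n) chain2_le (crown_swap i j)
    (fam2 [set (false, i); (true, j)] [set (false, j); (true, i)]).
Proof.
move=> ij; apply: generator_fam2.
- exact: crown_le_refl.
- exact: crown_le_anti.
- exact: crown_swap_aut.
- by rewrite crown_ltE.
- by rewrite crown_ltE /= eq_sym.
- exact: crown_height.
- exact: moved_crown_swap.
- by rewrite crown_swap_set2 tpermL tpermR.
- by rewrite crown_swap_set2 tpermL tpermR.
Qed.

Hypothesis n_gt1 : 1 < n.

Lemma crown_nonmaximal x : nonmaximal (crown_le n) x = ~~ x.1.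
Proof.
case: x => [[] i]; apply/existsP => /=.
  by case=> y; rewrite crown_ltE.
have [j ji] : exists j : 'I_n, j != i.
  pose i0 := Ordinal (ltnW n_gt1); pose i1 := Ordinal n_gt1.
  by case: (eqVneq i i0) => [->|]; [exists i1 | exists i0; rewrite eq_sym].
by exists (true, j); rewrite crown_ltE /= eq_sym.
Qed.

Lemma crown_sym1 b i j : i != j -> sym1 (crown_le n) chain2_le 2 (b, i) (b, j).
Proof.
move=> ij; have ji : j != i by rewrite eq_sym.
have pairs_neq (k l : 'I_n) :
    k != l -> [set (false, k); (true, l)] != [set (false, l); (true, k)].
  move=> kl; apply/negP => /eqP/setP/(_ (false, k)).
  by rewrite !inE !xpair_eqE /= eqxx (negbTE kl).
case: b.
- have := sym1_fam2 (a := (true, i)) (crown_swap_generator ji) (pairs_neq _ _ ji).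
  by rewrite crown_swapE tpermR; apply; rewrite !inE eqxx ?orbT.
- have := sym1_fam2 (a := (false, i)) (crown_swap_generator ij) (pairs_neq _ _ ij).
  by rewrite crown_swapE tpermL; apply; rewrite !inE eqxx ?orbT.
Qed.

Lemma crown_qr_sym x y : qr_sym (crown_le n) chain2_le 2 x y = (x.1 == y.1).
Proof.
apply/idP/eqP.
- move/(qr_sym_aut_invariant (f := nonmaximal (crown_le n))).
  by rewrite !crown_nonmaximal => /(_ (fun s x => nonmaximal_aut x))/negb_inj.
- case: x y => [b i] [c j] /= <-.
  by case: (eqVneq i j) => [<-|ij]; [exact: connect0 | exact/connect1/crown_sym1].
Qed.

Definition crown_level (b : bool) : {set bool * 'I_n} := [set x | x.1 == b].

Lemma crown_classes :
  qr_classes (crown_le n) chain2_le 2 = [set crown_level false; crown_level true].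
Proof.
have classE x : [set y | qr_sym (crown_le n) chain2_le 2 x y] = crown_level x.1.
  by apply/setP => y; rewrite !inE crown_qr_sym eq_sym.
pose i0 := Ordinal (ltnW n_gt1).
apply/setP => E; rewrite !inE; apply/imsetP/orP.
- by case=> x _ ->; rewrite classE; case: (x.1); [right | left].
- by case=> /eqP ->; [exists (false, i0) | exists (true, i0)]; rewrite ?classE.
Qed.

Lemma crown_quot_le b c :
  quot_le (crown_le n) (crown_level b) (crown_level c) = chain2_le b c.
Proof.
pose i0 := Ordinal (ltnW n_gt1); pose i1 := Ordinal n_gt1.
have quot_leP x y : x.1 = b -> y.1 = c -> crown_le n x y ->
    quot_le (crown_le n) (crown_level b) (crown_level c).
  move=> <- <- le_xy; apply/existsP; exists x; rewrite inE eqxx /=.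
  by apply/existsP; exists y; rewrite inE eqxx.
case: b c quot_leP => [] [] /= quot_leP.
- by apply: (quot_leP (true, i0) (true, i0)); rewrite ?crown_le_refl.
- apply/negbTE/existsP => -[[a k] /andP[/[!inE] /= /eqP-> /existsP[[a' l]]]].
  by rewrite inE /= => /andP[/eqP->]; rewrite /crown_le xpair_eqE.
- by apply: (quot_leP (false, i0) (true, i1)).
- by apply: (quot_leP (false, i0) (false, i0)); rewrite ?crown_le_refl.
Qed.

End Crown.

Theorem mainTheorem6 (n : nat) (hn : 2 <= n) :
  retractable (crown_le n) chain2_le 2 chain2_le.
Proof.
split; rewrite crown_classes //.
- by apply: iso_on_chain2; rewrite crown_quot_le.
- apply/negP => /iso_on_card; rewrite cardsT card_prod card_bool card_ord cards2 => card_2n.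
  have : 2 * n <= 2 * 1 by rewrite card_2n ltnS leq_b1.
  by rewrite leq_pmul2l // leqNgt hn.
Qed.
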